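(* Let $\mathbf{f}_1,\mathbf{f}_2,\mathbf{g}$ be power sums such that the multiplicative group generated by all their roots is torsion-free and $\mathbf{f}_1$ is reduced. Suppose that $\mathbf{f}_2=\mathbf{f}_1\cdot\mathbf{g}$ (as functions of $n$). Then every root of $\mathbf{f}_1$ has finite index in the group generated by the roots of $\mathbf{f}_2$, i.e. for every root $\gamma$ of $\mathbf{f}_1$ some positive integer power of $\gamma$ lies in the multiplicative group generated by the roots of $\mathbf{f}_2$.
   Context: A power sum is a function $n\mapsto\mathbf{f}(n)=\sum_{i=1}^k b_i\alpha_i^n$ with $k\ge1$, nonzero complex coefficients $b_i$ and pairwise distinct nonzero complex numbers $\alpha_i$; this representation is unique and the $\alpha_i$ are the roots of $\mathbf{f}$. A power sum is reduced if one of its roots equals $1$. *)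

From mathcomp Require Import all_boot all_order all_algebra.
From mathcomp Require Import complex.
From mathcomp Require Import reals.
Set Implicit Arguments. Unset Strict Implicit. Unset Printing Implicit Defensive.
Import Order.TTheory GRing.Theory Num.Theory.
Local Open Scope ring_scope.

(* A power sum is given by its coefficient list b and its root list a:
   n |-> \sum_i b_i a_i^n, with k >= 1 terms, nonzero coefficients and
   pairwise distinct nonzero roots. *)
Definition is_power_sum {C : fieldType} (b a : seq C) : Prop :=
  [/\ size b = size a, (0 < size a)%N, all (fun x => x != 0) b,
      all (fun x => x != 0) a & uniq a].

Definition psum {C : fieldType} (b a : seq C) (n : nat) : C :=
  \sum_(i < size a) b`_i * a`_i ^+ n.

Definition in_gen {C : fieldType} (S : seq C) (x : C) : Prop :=
  exists ks : seq int, size ks = size S /\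
    x = \prod_(i < size S) S`_i ^ ks`_i.

Definition gen_torsion_free {C : fieldType} (S : seq C) : Prop :=
  forall x : C, in_gen S x -> forall m : nat, (0 < m)%N -> x ^+ m = 1 -> x = 1.

From mathcomp Require Import all_boot all_order all_algebra.
From mathcomp Require Import complex.
From mathcomp Require Import reals.
From mathcomp Require Import zify ring lra.
From Stdlib Require Import Classical.
Import Order.TTheory GRing.Theory Num.Theory.
Local Open Scope ring_scope.
Set Implicit Arguments. Unset Strict Implicit.

(* Suppose no positive power of gamma lies in the group H generated by the
   roots of f2.  Exponent vectors over all the roots present the generated
   group as a quotient of Z^s.  No multiple of the exponent vector of gamma lies
   in the preimage of H, so some rational linear form phi kills that preimage
   but not the vector of gamma: phi is a homomorphism to Q vanishing on H with
   phi(gamma) <> 0.  Refining phi lexicographically by finitely many further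
   such homomorphisms, which separate the roots of f1 thanks to
   torsion-freeness, gives an order compatible with multiplication and strict
   on the roots of f1.  The product of the largest roots of f1 and of g then
   arises only once in the expansion of f1 * g, so it is a root of f2 and
   phi(max f1) + phi(max g) = 0; likewise for the smallest roots.  Since
   phi(1) = 0, phi vanishes on all roots of f1, including gamma. *)

Local Notation ratmx A := (map_mx (intr : int -> rat) A).

Lemma exp_sum_coef_eq0 (C : fieldType) (I : finType) (c z : I -> C) :
  (forall n, \sum_i c i * z i ^+ n = 0) -> forall x, \sum_(i | z i == x) c i = 0.
Proof.
move=> csum0 x.
pose q := \prod_(i | z i != x) ('X - (z i)%:P).
have qx_neq0 : q.[x] != 0.
  by rewrite horner_prod; apply/prodf_neq0 => i zi; rewrite hornerXsubC subr_eq0 eq_sym.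
have qz_eq0 i : z i != x -> q.[z i] = 0.
  by move=> zi; rewrite horner_prod (bigD1 i) //= hornerXsubC subrr mul0r.
have : \sum_i c i * q.[z i] = 0.
  under eq_bigr => i _ do rewrite horner_coef mulr_sumr.
  rewrite exchange_big big1 //= => k _.
  by under eq_bigr => i _ do rewrite mulrCA; rewrite -mulr_sumr csum0 mulr0.
rewrite (bigID (fun i => z i == x)) /= [X in _ + X]big1 ?addr0; last first.
  by move=> i /qz_eq0 ->; rewrite mulr0.
rewrite (eq_bigr (fun i => q.[x] * c i)) => [|i /eqP ->]; last exact: mulrC.
by rewrite -mulr_sumr => /eqP; rewrite mulf_eq0 (negbTE qx_neq0) => /eqP.
Qed.

(* Uniqueness makes [- b1_x * bg_y] the whole coefficient of [(x * y) ^ n] in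
   [f2 - f1 * g], so it cannot cancel unless [x * y] is a root of [f2]. *)
Lemma unique_product_root (C : fieldType) (b1 a1 b2 a2 bg ag : seq C) x y :
  is_power_sum b1 a1 -> is_power_sum bg ag ->
  (forall n, psum b2 a2 n = psum b1 a1 n * psum bg ag n) ->
  x \in a1 -> y \in ag ->
  (forall x' y', x' \in a1 -> y' \in ag -> x' * y' = x * y -> x' = x) ->
  x * y \in a2.
Proof.
move=> [sz1 _ b1_neq0 a1_neq0 a1_uniq] [szg _ bg_neq0 _ ag_uniq] f2_eq xa1 yag.
have {xa1}[i0 <-] : exists i0 : 'I_(size a1), a1`_i0 = x.
  by case/(nthP 0): xa1 => i lti <-; exists (Ordinal lti).
have {yag}[j0 <-] : exists j0 : 'I_(size ag), ag`_j0 = y.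
  by case/(nthP 0): yag => j ltj <-; exists (Ordinal ltj).
move=> xy_unique.
apply: contraT => xy_a2.
pose c (k : 'I_(size a2) + 'I_(size a1) * 'I_(size ag)) :=
  match k with inl l => b2`_l | inr p => - (b1`_p.1 * bg`_p.2) end.
pose z (k : 'I_(size a2) + 'I_(size a1) * 'I_(size ag)) :=
  match k with inl l => a2`_l | inr p => a1`_p.1 * ag`_p.2 end.
have csum0 n : \sum_k c k * z k ^+ n = 0.
  rewrite big_sumType /= -[X in X + _]/(psum b2 a2 n) f2_eq /psum.
  by rewrite big_distrlr pair_bigA -big_split big1 //= => -[i j] _ /=; rewrite exprMn; ring.
have := exp_sum_coef_eq0 csum0 (a1`_i0 * ag`_j0).
rewrite big_sumType /= big_pred0 => [|l]; last first.
  by apply: contraNF xy_a2 => /eqP <-; rewrite mem_nth.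
have b1_i0_neq0 : b1`_i0 != 0 by rewrite (allP b1_neq0) ?mem_nth ?sz1.
have bg_j0_neq0 : bg`_j0 != 0 by rewrite (allP bg_neq0) ?mem_nth ?szg.
rewrite add0r (big_pred1 (i0, j0)) => [/eqP|[i j] /=].
  by rewrite oppr_eq0 mulf_eq0 (negbTE b1_i0_neq0) (negbTE bg_j0_neq0).
apply/eqP/eqP => [eq_prod | [-> ->] //].
have eq_i : i = i0.
  apply/val_inj/eqP; rewrite -(nth_uniq 0 _ _ a1_uniq) ?ltn_ord //.
  by apply/eqP/(xy_unique _ ag`_j); rewrite ?mem_nth ?ltn_ord.
rewrite eq_i in eq_prod *.
have a1_i0_neq0 : a1`_i0 != 0 by rewrite (allP a1_neq0) ?mem_nth.
by move/(mulfI a1_i0_neq0)/eqP: eq_prod; rewrite nth_uniq ?ltn_ord // => /eqP/val_inj ->.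
Qed.

Section Monomials.
Variables (C : fieldType) (S : seq C).
Hypothesis S_neq0 : all (fun x => x != 0) S.

Definition monom (k : 'rV[int]_(size S)) : C := \prod_(i < size S) S`_i ^ k 0 i.

Definition expv (x : C) : 'rV[int]_(size S) :=
  \row_(j < size S) (j == index x S :> nat)%:R.

Let nth_neq0 (i : 'I_(size S)) : S`_i != 0.
Proof. by rewrite (allP S_neq0) ?mem_nth. Qed.

Lemma monom0 : monom 0 = 1.
Proof. by rewrite /monom big1 // => i _; rewrite mxE expr0z. Qed.

Lemma monomD a b : monom (a + b) = monom a * monom b.
Proof. by rewrite /monom -big_split; apply: eq_bigr => i _; rewrite mxE expfzDr. Qed.

Lemma monomZ (z : int) a : monom (z *: a) = monom a ^ z.
Proof.
rewrite /monom (big_morph (fun x => x ^ z) (fun x y => expfzMl x y z) (exp1rz _ z)).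
by apply: eq_bigr => i _; rewrite mxE exprz_exp mulrC.
Qed.

Lemma monomMn a m : monom (a *+ m) = monom a ^+ m.
Proof. by elim: m => [|m IH]; rewrite ?mulr0n ?monom0 // mulrS monomD IH exprS. Qed.

Lemma monom_neq0 a : monom a != 0.
Proof. by apply/prodf_neq0 => i _; rewrite expfz_eq0 negb_and nth_neq0 orbT. Qed.

Lemma monomB a b : monom (a - b) = monom a / monom b.
Proof.
apply: (canRL (mulfK (monom_neq0 b))).
by rewrite -monomD subrK.
Qed.

Lemma monom_expv x : x \in S -> monom (expv x) = x.
Proof.
rewrite -index_mem => ltxS; rewrite /monom (bigD1 (Ordinal ltxS)) //= big1.
  by rewrite mxE eqxx expr1z mulr1 nth_index // -index_mem.
by move=> j /negbTE neq_j; rewrite mxE -val_eqE /= in neq_j *; rewrite neq_j expr0z.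
Qed.

Lemma in_genP x : in_gen S x <-> exists k, x = monom k.
Proof.
split=> [[ks [_ ->]] | [k ->]].
  by exists (\row_i ks`_i); apply: eq_bigr => i _; rewrite mxE.
exists [seq k 0 i | i <- enum 'I_(size S)]; rewrite size_map size_enum_ord.
split=> //; apply: eq_bigr => i _.
by rewrite (nth_map i) ?size_enum_ord // nth_ord_enum.
Qed.

Lemma in_gen1 : in_gen S 1.
Proof. by apply/in_genP; exists 0; rewrite monom0. Qed.

Lemma in_genM x y : in_gen S x -> in_gen S y -> in_gen S (x * y).
Proof.
by move=> /in_genP[a ->] /in_genP[b ->]; apply/in_genP; exists (a + b); rewrite monomD.
Qed.

Lemma in_genXz x (z : int) : in_gen S x -> in_gen S (x ^ z).
Proof. by move=> /in_genP[a ->]; apply/in_genP; exists (z *: a); rewrite monomZ. Qed.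

Lemma mem_in_gen x : x \in S -> in_gen S x.
Proof. by move=> xS; apply/in_genP; exists (expv x); rewrite monom_expv. Qed.

End Monomials.

Arguments monom {C} S k.
Arguments expv {C} S x.

Definition lform s (w : 'cV[rat]_s) (k : 'rV[int]_s) : rat := (ratmx k *m w) 0 0.

Lemma lformD s (w : 'cV[rat]_s) a b : lform w (a + b) = lform w a + lform w b.
Proof. by rewrite /lform map_mxD mulmxDl mxE. Qed.

Lemma lformN s (w : 'cV[rat]_s) a : lform w (- a) = - lform w a.
Proof. by rewrite /lform map_mxN mulNmx mxE. Qed.

Lemma lformB s (w : 'cV[rat]_s) a b : lform w (a - b) = lform w a - lform w b.
Proof. by rewrite lformD lformN. Qed.

Lemma lform_opp s (w : 'cV[rat]_s) a : lform (- w) a = - lform w a.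
Proof. by rewrite /lform mulmxN mxE. Qed.

Lemma rat_spanning_rows s (T : 'rV[int]_s -> Prop) :
  exists n (A : 'M[int]_(n, s)), (forall i, T (row i A)) /\
    forall t, T t -> (ratmx t <= ratmx A)%MS.
Proof.
suff grow r n (A : 'M[int]_(n, s)) :
    (s - \rank (ratmx A) <= r)%N -> (forall i, T (row i A)) ->
  exists n (A : 'M[int]_(n, s)), (forall i, T (row i A)) /\
    forall t, T t -> (ratmx t <= ratmx A)%MS.
  by apply: (grow s 0%N 0); [exact: leq_subr | case].
elim: r n A => [|r IH] n A rank_A TA.
  exists n, A; split=> // t _; apply/submx_full.
  by rewrite /row_full eqn_leq rank_leq_col -subn_eq0 -leqn0.
have [spanA | not_span] := classic (forall t, T t -> (ratmx t <= ratmx A)%MS).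
  by exists n, A.
have [t t_bad] := not_all_ex_not _ _ not_span.
have [Tt t_notin_A] := imply_to_and _ _ t_bad.
apply: (IH _ (col_mx A t)); last first.
  by move=> i; rewrite -(splitK i); case: split => j /=; rewrite ?rowKu // rowKd ord1 row_id.
have ltA : (ratmx A < ratmx (col_mx A t))%MS.
  rewrite ltmxE map_col_mx col_mx_sub submx_refl (negbTE (introN idP t_notin_A)) andbT.
  by rewrite -addsmxE addsmxSl.
have := rank_ltmx ltA; have := rank_leq_col (ratmx (col_mx A t)).
(* [set] identifies the rank terms, which differ in their structure instances. *)
move: rank_A; set rA := \rank _; set rAt := \rank _; lia.
Qed.

Lemma clear_denominators n (u : 'rV[rat]_n) :
  exists2 m : nat, (0 < m)%N & exists z : 'rV[int]_n, ratmx z = m%:R *: u.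
Proof.
exists (\prod_(i < n) absz (denq (u ord0 i))).
  by apply: prodn_gt0 => i; rewrite absz_gt0 denq_neq0.
exists (\row_i ((\prod_(j < n | j != i) absz (denq (u ord0 j)))%:Z * numq (u ord0 i))).
apply/matrixP => i j; rewrite (ord1 i) !mxE [in RHS](bigD1 j) //=.
set P := (\prod_(_ < n | _) _)%N; set d := denq (u ord0 j); set N := numq (u ord0 j).
have u_eq : u ord0 j = N%:~R / d%:~R by rewrite divq_num_den.
have d_neq0 : d%:~R != 0 :> rat by rewrite intr_eq0 denq_neq0.
rewrite natrM natr_absz ger0_norm ?denq_ge0 // u_eq rmorphM /= -pmulrn; field.
exact: d_neq0.
Qed.

Lemma lattice_separation s (T : 'rV[int]_s -> Prop) (v : 'rV[int]_s) :
  T 0 -> (forall a b, T a -> T b -> T (a + b)) -> (forall (z : int) a, T a -> T (z *: a)) ->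
  (forall m, (0 < m)%N -> ~ T (v *+ m)) ->
  exists2 w : 'cV[rat]_s, (forall t, T t -> lform w t = 0) & lform w v != 0.
Proof.
move=> T0 TD TZ no_multiple.
have [n [A [TA spanA]]] := rat_spanning_rows T.
have v_notin_A : ~~ (ratmx v <= ratmx A)%MS.
  apply/negP => /submxP[u v_eq].
  have [m m_gt0 [z z_eq]] := clear_denominators u.
  apply: (no_multiple m m_gt0).
  suff -> : v *+ m = z *m A.
    by rewrite mulmx_sum_row; apply: (big_ind T) => // i _; exact: TZ.
  have vm_eq : m%:R *: ratmx v = ratmx (z *m A).
    by rewrite v_eq scalemxAl -z_eq map_mxM.
  apply/matrixP => i j; apply: (@intr_inj rat).
  move/(congr1 (fun M : 'M[rat]_(1, s) => M i j)): vm_eq; rewrite !mxE => <-.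
  by rewrite -scaler_nat mxE rmorphM /= rmorph_nat mulr_natl.
have /matrix0Pn[i [j vK_neq0]] : ratmx v *m cokermx (ratmx A) != 0.
  by rewrite -submxE.
have lform_col t : lform (col j (cokermx (ratmx A))) t
    = (ratmx t *m cokermx (ratmx A)) 0 j.
  by rewrite /lform !mxE; apply: eq_bigr => k _; rewrite !mxE.
exists (col j (cokermx (ratmx A))); last by rewrite lform_col -(ord1 i).
by move=> t /spanA; rewrite submxE lform_col => /eqP ->; rewrite mxE.
Qed.

Definition lkey s (W : seq 'cV[rat]_s) (k : 'rV[int]_s) : seqlexi rat :=
  [seq lform w k | w <- W].

Lemma lkey_leD2r s (W : seq 'cV[rat]_s) a b c :
  (lkey W (a + c) <= lkey W (b + c))%O = (lkey W a <= lkey W b)%O.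
Proof. by rewrite /lkey; elim: W => //= w W IH; rewrite !lexi_cons !lformD !lerD2r IH. Qed.

Lemma lkey_cons_le s (w : 'cV[rat]_s) W a b :
  (lkey (w :: W) a <= lkey (w :: W) b)%O -> lform w a <= lform w b.
Proof. by rewrite /lkey /= lexi_cons => /andP[]. Qed.

Lemma exists_seq_max (T : eqType) d (U : orderType d) (f : T -> U) (s : seq T) :
  s != [::] -> exists2 x, x \in s & {in s, forall y, (f y <= f x)%O}.
Proof.
elim: s => // x [_ _ | x' s IH _].
  by exists x; rewrite ?mem_seq1 // => y; rewrite mem_seq1 => /eqP ->.
have [m ms m_max] := IH isT.
have [le_xm | le_mx] := leP (f x) (f m).
  exists m; first by rewrite inE ms orbT.
  by move=> y; rewrite inE => /predU1P[-> | /m_max].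
exists x; rewrite ?mem_head // => y; rewrite inE => /predU1P[-> // | /m_max le_ym].
exact: le_trans le_ym (ltW le_mx).
Qed.

Section MonomialForms.
Variables (C : fieldType) (S : seq C).
Hypothesis S_neq0 : all (fun x => x != 0) S.

(* [lform w] induces a homomorphism from the group generated by [S] to [Q]. *)
Definition factors_monom (w : 'cV[rat]_(size S)) :=
  forall t, monom S t = 1 -> lform w t = 0.

Lemma factors_monom_eq w a b :
  factors_monom w -> monom S a = monom S b -> lform w a = lform w b.
Proof.
move=> w_hom ab; apply/eqP; rewrite -subr_eq0 -lformB w_hom //.
by rewrite monomB // ab mulfV ?monom_neq0.
Qed.

Lemma lkey_max_product_unique (W : seq 'cV[rat]_(size S)) (A B : seq C) x y :
  {in W, forall w, factors_monom w} -> {subset A <= S} -> {subset B <= S} ->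
  {in A &, injective (fun x => lkey W (expv S x))} ->
  x \in A -> {in A, forall x', (lkey W (expv S x') <= lkey W (expv S x))%O} ->
  y \in B -> {in B, forall y', (lkey W (expv S y') <= lkey W (expv S y))%O} ->
  forall x' y', x' \in A -> y' \in B -> x' * y' = x * y -> x' = x.
Proof.
move=> W_hom AS BS key_inj xA x_max yB y_max x' y' x'A y'B xy_eq.
apply: key_inj => //; apply/le_anti; rewrite x_max //=.
have key_sum : lkey W (expv S x + expv S y) = lkey W (expv S x' + expv S y').
  apply/eq_in_map => w /W_hom w_hom; apply: factors_monom_eq w_hom _.
  by rewrite !monomD // !monom_expv ?(AS _ xA) ?(AS _ x'A) ?(BS _ yB) ?(BS _ y'B).
rewrite -(lkey_leD2r W _ _ (expv S y)) key_sum.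
by rewrite ![expv S x' + _]addrC lkey_leD2r y_max.
Qed.

Hypothesis S_tf : gen_torsion_free S.

Lemma separating_forms (D : seq 'rV[int]_(size S)) :
  exists2 W : seq 'cV[rat]_(size S), {in W, forall w, factors_monom w} &
    {in D, forall d, monom S d != 1 -> exists2 w, w \in W & lform w d != 0}.
Proof.
elim: D => [|d D [W W_hom W_sep]]; first by exists [::].
have [d1 | d_neq1] := eqVneq (monom S d) 1.
  by exists W => // d'; rewrite inE => /predU1P[-> | /W_sep //]; rewrite d1 eqxx.
have [w w_hom wd] : exists2 w, factors_monom w & lform w d != 0.
  apply: lattice_separation => [|a b a_eq1 b_eq1 | z a a_eq1 | m m_gt0 dm1].
  - exact: monom0.
  - by rewrite monomD // a_eq1 b_eq1 mulr1.
  - by rewrite monomZ // a_eq1 exp1rz.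
  - move/eqP: d_neq1; apply; apply: (S_tf _ m_gt0); last by rewrite -monomMn.
    by apply/in_genP; exists d.
exists (w :: W) => [w' | d'].
  by rewrite inE => /predU1P[-> | /W_hom].
rewrite inE => /predU1P[-> _ | /W_sep sep_d' /sep_d'[w' w'W w'd']].
  by exists w; rewrite ?mem_head.
by exists w'; rewrite // inE w'W orbT.
Qed.

Lemma exists_injective_lkey (A : seq C) : {subset A <= S} ->
  exists2 W : seq 'cV[rat]_(size S), {in W, forall w, factors_monom w} &
    {in A &, injective (fun x => lkey W (expv S x))}.
Proof.
move=> AS.
have [W W_hom W_sep] := separating_forms [seq expv S x - expv S y | x <- A, y <- A].
exists W => // x y xA yA key_eq; apply: contraTeq isT => neq_xy.
have y_neq0 : y != 0 by rewrite (allP S_neq0) ?AS.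
have [|w wW] := W_sep _ (allpairs_f _ xA yA).
  rewrite monomB // !monom_expv ?AS //; apply: contra neq_xy => /eqP xy1.
  by rewrite -(divfK y_neq0 x) xy1 mul1r.
by rewrite lformB subr_eq0 ((eq_in_map _ _ W).2 key_eq w wW) eqxx.
Qed.

End MonomialForms.

Section ProductOfPowerSums.
Variables (C : fieldType) (b1 a1 b2 a2 bg ag : seq C).
Hypotheses (ps1 : is_power_sum b1 a1) (ps2 : is_power_sum b2 a2) (psg : is_power_sum bg ag).
Hypothesis f2_eq : forall n, psum b2 a2 n = psum b1 a1 n * psum bg ag n.
Hypothesis S_tf : gen_torsion_free (a1 ++ a2 ++ ag).

Local Notation S := (a1 ++ a2 ++ ag).
Local Notation phi w x := (lform w (expv S x)).

Lemma roots_neq0 : all (fun x => x != 0) S.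
Proof. by case: ps1 ps2 psg => [? ? ? ? ?] [? ? ? ? ?] [? ? ? ? ?]; rewrite !all_cat; apply/and3P. Qed.

Let a1S : {subset a1 <= S}. Proof. by move=> x xa1; rewrite mem_cat xa1. Qed.
Let a2S : {subset a2 <= S}. Proof. by move=> x xa2; rewrite !mem_cat xa2 orbT. Qed.
Let agS : {subset ag <= S}. Proof. by move=> x xag; rewrite !mem_cat xag !orbT. Qed.

Lemma max_roots_form_sum_eq0 (psi : 'cV[rat]_(size S)) :
  (forall t, in_gen a2 (monom S t) -> lform psi t = 0) ->
  exists x y, [/\ x \in a1, y \in ag, {in a1, forall x', phi psi x' <= phi psi x},
    {in ag, forall y', phi psi y' <= phi psi y} & phi psi x + phi psi y = 0].
Proof.
move=> psi_a2.
have psi_hom : factors_monom psi.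
  by move=> t t1; apply: psi_a2; rewrite t1; exact: in_gen1.
have [W0 W0_hom W0_inj] := exists_injective_lkey roots_neq0 S_tf a1S.
pose W := psi :: W0.
have W_hom : {in W, forall w, factors_monom w}.
  by move=> w; rewrite inE => /predU1P[-> | /W0_hom].
have W_inj : {in a1 &, injective (fun x => lkey W (expv S x))}.
  by move=> x x' xa1 x'a1 [_ /W0_inj]; apply.
have roots_nonnil (b a : seq C) : is_power_sum b a -> a != [::].
  by case=> _ a_gt0 _ _ _; rewrite -size_eq0 -lt0n.
have [x xa1 x_max] := exists_seq_max (fun x => lkey W (expv S x)) (roots_nonnil _ _ ps1).
have [y yag y_max] := exists_seq_max (fun y => lkey W (expv S y)) (roots_nonnil _ _ psg).
have xy_a2 : x * y \in a2.
  apply: (unique_product_root ps1 psg f2_eq xa1 yag).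
  exact: (lkey_max_product_unique roots_neq0 W_hom a1S agS W_inj xa1 x_max yag y_max).
exists x, y; split=> // [x' /x_max | y' /y_max | ]; try exact: lkey_cons_le.
rewrite -lformD -(psi_a2 (expv S (x * y))); last first.
  by rewrite monom_expv ?a2S //; exact: mem_in_gen.
apply: (factors_monom_eq roots_neq0 psi_hom).
by rewrite monomD ?roots_neq0 // !monom_expv //; [exact: a2S | exact: agS | exact: a1S].
Qed.

Lemma form_vanishes_on_roots (psi : 'cV[rat]_(size S)) :
  1 \in a1 -> (forall t, in_gen a2 (monom S t) -> lform psi t = 0) ->
  {in a1, forall x, phi psi x = 0}.
Proof.
move=> one_a1 psi_a2 z za1.
have phi1 : phi psi 1 = 0.
  by apply: psi_a2; rewrite monom_expv ?a1S ?roots_neq0 //; exact: in_gen1.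
have [x [y [_ yag x_max y_max sum_max]]] := max_roots_form_sum_eq0 psi_a2.
have opp_psi_a2 t : in_gen a2 (monom S t) -> lform (- psi) t = 0.
  by move/psi_a2; rewrite lform_opp => ->; rewrite oppr0.
have [x' [y' [_ y'ag x'_min _ sum_min]]] := max_roots_form_sum_eq0 opp_psi_a2.
move: (x_max _ za1) (x_max _ one_a1) (y_max _ y'ag) (x'_min _ za1) (x'_min _ one_a1) sum_min.
rewrite !lform_opp; lra.
Qed.

End ProductOfPowerSums.

Theorem lemma5p10 (R : realType) (b1 a1 b2 a2 bg ag : seq R[i]) :
  is_power_sum b1 a1 -> is_power_sum b2 a2 -> is_power_sum bg ag ->
  gen_torsion_free (a1 ++ a2 ++ ag) ->
  1 \in a1 ->
  (forall n : nat, psum b2 a2 n = psum b1 a1 n * psum bg ag n) ->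
  forall gamma : R[i], gamma \in a1 ->
    exists k : nat, (0 < k)%N /\ in_gen a2 (gamma ^+ k).
Proof.
move=> ps1 ps2 psg S_tf one_a1 f2_eq gamma ga1.
apply: NNPP => no_power.
have S_neq0 := roots_neq0 ps1 ps2 psg.
have a2_neq0 : all (fun x => x != 0) a2 by case: ps2.
pose T t := in_gen a2 (monom (a1 ++ a2 ++ ag) t).
have [psi psi_a2] : exists2 psi, (forall t, T t -> lform psi t = 0) &
    lform psi (expv (a1 ++ a2 ++ ag) gamma) != 0.
  apply: lattice_separation => [|a b | z a | m m_gt0].
  - by rewrite /T monom0; exact: in_gen1.
  - by rewrite /T monomD //; exact: in_genM.
  - by rewrite /T monomZ //; exact: in_genXz.
  - by rewrite /T monomMn // monom_expv ?mem_cat ?ga1 // => gm; apply: no_power; exists m.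
by rewrite (form_vanishes_on_roots ps1 ps2 psg f2_eq S_tf one_a1 psi_a2) ?eqxx.
Qed.
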